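(* Let $F$ be a distribution on $[0,\infty)$ with a long-tailed density $f$ on $[\widehat x,\infty)$. Suppose one of the following holds: (i) there exists $c>0$ such that $f(y)\ge cf(x)$ for all $y\in(x,2x]$ and all sufficiently large $x$; (ii) $g(x)=-\ln f(x)$ is concave for $x\ge x_0$ for some $x_0$, and for some function $h(x)\to\infty$ one has $f(x+t)\sim f(x)$ as $x\to\infty$ uniformly in $|t|\le h(x)$ and $x\,e^{-g(h(x))}\to0$ as $x\to\infty$. Then $f$ is subexponential, i.e. $F\in\mathcal S_{ac}$.
   Context: A distribution $F$ has a density $f$ on $[\widehat x,\infty)$ if $F(B)=\int_Bf(y)dy$ for Borel $B\subseteq[\widehat x,\infty)$. Such a density is long-tailed if it is bounded on $[\widehat x,\infty)$, $f(x)>0$ for all large $x$, and $f(x+t)\sim f(x)$ as $x\to\infty$ uniformly in $t\in[0,1]$. $F\in\mathcal S_{ac}$ if $f$ is long-tailed and $2\int_0^{\widehat x}f(x-y)F(dy)+\int_{\widehat x}^{x-\widehat x}f(x-y)f(y)dy\sim2f(x)$ as $x\to\infty$. *)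

From HB Require Import structures.
From mathcomp Require Import all_boot all_order all_algebra.
From mathcomp Require Import all_classical all_reals all_analysis.
Set Implicit Arguments. Unset Strict Implicit. Unset Printing Implicit Defensive.
Import Order.TTheory GRing.Theory Num.Theory.
Import numFieldNormedType.Exports.
Local Open Scope classical_set_scope.
Local Open Scope ring_scope.

Definition has_density_on {R : realType} (F : probability R R) (f : R -> R)
    (xh : R) : Prop :=
  measurable_fun `[xh, +oo[ f /\
  (forall y, xh <= y -> 0 <= f y) /\
  forall B : set R, measurable B -> B `<=` `[xh, +oo[ ->
    F B = (\int[lebesgue_measure]_(y in B) (f y)%:E)%E.

Definition asym_equiv {R : realType} (a b : R -> R) : Prop :=
  (fun x => a x / b x) x @[x --> +oo] --> (1 : R).

Definition long_tailed_density {R : realType} (f : R -> R) (xh : R) : Prop :=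
  (exists M : R, forall x, xh <= x -> `|f x| <= M) /\
  (\forall x \near +oo, 0 < f x) /\
  (forall eps : R, 0 < eps -> \forall x \near +oo,
     forall t : R, 0 <= t <= 1 -> `|f (x + t) / f x - 1| <= eps).

Definition S_ac {R : realType} (F : probability R R) (f : R -> R) (xh : R)
  : Prop :=
  long_tailed_density f xh /\
  asym_equiv
    (fun x => 2 * Rintegral F `[0, xh[ (fun y => f (x - y))
              + Rintegral lebesgue_measure `[xh, x - xh] (fun y => f (x - y) * f y))
    (fun x => 2 * f x).

Definition concave_on {R : realType} (g : R -> R) (A : set R) : Prop :=
  forall x y l, A x -> A y -> 0 <= l <= 1 ->
    l * g x + (1 - l) * g y <= g (l * x + (1 - l) * y).

From HB Require Import structures.
From mathcomp Require Import all_boot all_order all_algebra.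
From mathcomp Require Import all_classical all_reals all_analysis.
From mathcomp Require Import ring lra measurable_realfun.
Set Implicit Arguments.
Unset Strict Implicit.
Unset Printing Implicit Defensive.
Import Order.TTheory GRing.Theory Num.Theory.
Import numFieldNormedType.Exports.
Local Open Scope classical_set_scope.
Local Open Scope ring_scope.

(* The convolution term splits at x/2 into two equal halves.  For y in
   [0, xh) and for y in [xh, k] with k = k(x) -> oo slowly, long-tailedness
   makes f(x - y) uniformly close to f(x), so these ranges contribute
   F[0, xh) f(x) and F[xh, k] f(x) up to o(f(x)), while F(k, oo) -> 0; the
   masses add up to 1.  It remains to show that the integral of
   f(x - y) f(y) over (k, x/2] is o(f(x)).  Under (i), f(x - y) <= f(x)/c
   there, so that integral is at most F(k, oo) f(x)/c.  Under (ii) take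
   k = h(x): since -ln f is concave, f(x - y) f(y) <= f(x - k) f(k) on
   [k, x/2] and f(x - k) ~ f(x), so the integral is at most
   x f(h(x)) f(x) = o(f(x)). *)

Lemma near_pinftyP (R : realType) (P : R -> Prop) :
  (\forall x \near +oo, P x) <-> exists M, forall x, M < x -> P x.
Proof.
split=> [[M [_ PM]]|[M PM]]; exists M => //.
by split=> //; exact: num_real.
Qed.

Lemma dist_le_of_ratio (R : realFieldType) (a b e : R) : 0 < b ->
  `|a / b - 1| <= e -> `|a - b| <= e * b.
Proof.
move=> b0 abe; have -> : a - b = (a / b - 1) * b.
  by rewrite mulrBl divfK ?gt_eqF // mul1r.
by rewrite normrM (gtr0_norm b0) ler_wpM2r // ltW.
Qed.

Lemma dist1_ratio_le (R : realFieldType) (a b p q u e : R) : 0 < u ->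
  p + q = 1 -> `|a - p * u| <= e / 4 * u -> `|b - q * u| <= e / 4 * u ->
  `|1 - (2 * a + 2 * b) / (2 * u)| <= e.
Proof.
move=> u0 pq1 ha hb.
have -> : 1 - (2 * a + 2 * b) / (2 * u) = ((p * u - a) + (q * u - b)) / u.
  have -> : q = 1 - p by lra.
  by field; rewrite gt_eqF.
rewrite normrM normfV (gtr0_norm u0) ler_pdivrMr //.
rewrite distrC in ha; rewrite distrC in hb.
apply: le_trans (ler_normD _ _) _; have := normr_ge0 (p * u - a); lra.
Qed.

Lemma mul_le_of_concave_neg_ln (R : realType) (f : R -> R) (x0 a b y : R) :
  concave_on (fun x => - ln (f x)) `[x0, +oo[%classic ->
  x0 <= a -> a < b -> a <= y <= b -> 0 < f a -> 0 < f b -> 0 < f y ->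
  0 < f (a + b - y) -> f y * f (a + b - y) <= f a * f b.
Proof.
move=> conc x0a ab /andP[ay yb] fa fb fy fz.
have ba : b - a != 0 by rewrite subr_eq0 gt_eqF.
pose l := (b - y) / (b - a).
have l0 : 0 <= l by rewrite divr_ge0 // subr_ge0 // ltW.
have l1 : l <= 1 by rewrite ler_pdivrMr ?subr_gt0 // mul1r lerD2l lerN2.
have l01 : 0 <= l <= 1 by rewrite l0 l1.
have ina : `[x0, +oo[%classic a by rewrite /= in_itv /= x0a.
have inb : `[x0, +oo[%classic b by rewrite /= in_itv /= (le_trans x0a (ltW ab)).
have := conc a b l ina inb l01; have -> : l * a + (1 - l) * b = y by rewrite /l; field.
have := conc b a l inb ina l01.
have -> : l * b + (1 - l) * a = a + b - y by rewrite /l; field.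
move=> conc_ba conc_ab.
rewrite -ler_ln ?posrE ?mulr_gt0 // !lnM ?posrE //.
move: conc_ab conc_ba; move: (ln (f a)) (ln (f b)) (ln (f y)) (ln (f (a + b - y))).
by move=> p q r s; nra.
Qed.

Section long_tailed.
Variables (R : realType) (f : R -> R) (xh : R).
Hypothesis ltf : long_tailed_density f xh.

Lemma long_tailed_bounded : exists M, 0 <= M /\ forall y, xh <= y -> `|f y| <= M.
Proof.
case: ltf => [[M fM] _]; exists M; split => //.
exact: le_trans (normr_ge0 _) (fM xh (lexx _)).
Qed.

Lemma long_tailed_pos : exists M, forall x, M < x -> 0 < f x.
Proof. by case: ltf => _ [/near_pinftyP]. Qed.

Lemma long_tailed_shift1 (e : R) : 0 < e -> exists M, forall x, M < x ->
  0 < f x /\ forall t, 0 <= t <= 1 -> `|f (x + t) - f x| <= e * f x.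
Proof.
move=> e0; case: ltf => _ [_ /(_ e e0)/near_pinftyP [M1 fM1]].
have [M2 fM2] := long_tailed_pos.
exists (Num.max M1 M2) => x; rewrite gt_max => /andP[x1 x2].
have fx := fM2 _ x2; split=> // t t01.
exact: dist_le_of_ratio (fM1 _ x1 _ t01).
Qed.

Lemma long_tailed_shiftD (n : nat) (e : R) : 0 < e -> exists M, forall x, M < x ->
  0 < f x /\ forall t, 0 <= t <= n%:R -> `|f (x + t) - f x| <= e * f x.
Proof.
elim: n e => [|n IH] e e0.
  have [M fM] := long_tailed_pos; exists M => x /fM fx; split=> // t.
  rewrite -eq_le => /eqP <-.
  by rewrite addr0 subrr normr0 mulr_ge0 ?ltW.
(* relative errors d over [0, n] and d over one more unit compound to 2d + d^2 <= 3d *)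
pose d := Num.min (e / 3) 1.
have d0 : 0 < d by rewrite lt_min ltr01 andbT divr_gt0.
have de : d <= e / 3 by rewrite ge_min lexx.
have d1 : d <= 1 by rewrite ge_min lexx orbT.
have [M1 fM1] := IH d d0; have [M2 fM2] := long_tailed_shift1 d0.
exists (Num.max M1 M2) => x; rewrite gt_max => /andP[x1 x2].
have [fx near_x] := fM1 x x1; split=> // t /andP[t0 tn].
have [tn'|tn'] := leP t n%:R.
  apply: le_trans (near_x t _) _; first by rewrite t0 tn'.
  by rewrite ler_wpM2r ?ltW //; lra.
have xnM2 : M2 < x + n%:R by have := ler0n R n; lra.
have := (fM2 _ xnM2).2 (t - n%:R).
rewrite (_ : x + n%:R + (t - n%:R) = x + t); last by ring.
have -> : 0 <= t - n%:R <= 1 by rewrite -natr1 in tn; apply/andP; split; lra.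
move=> /(_ isT); have := near_x n%:R; rewrite lexx ler0n => /(_ isT).
move: (f (x + t)) (f (x + n%:R)) (f x) fx => a b c c0.
rewrite !ler_norml => /andP[h1 h2] /andP[h3 h4].
apply/andP; split; nra.
Qed.

Lemma long_tailed_shiftB (K e : R) : 0 < e -> exists M, forall x, M < x ->
  0 < f x /\ forall y, 0 <= y <= K -> `|f (x - y) - f x| <= e * f x.
Proof.
move=> e0; pose n := Num.Def.archi_bound `|K|.
have Kn : K <= n%:R := le_trans (ler_norm K) (ltW (archi_boundP (normr_ge0 K))).
pose d := Num.min (e / 2) (1 / 2).
have d0 : 0 < d by rewrite lt_min !divr_gt0.
have de : d <= e / 2 by rewrite ge_min lexx.
have d1 : d <= 1 / 2 by rewrite ge_min lexx orbT.
have [M fM] := long_tailed_shiftD n d0.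
exists (M + n%:R) => x xM.
have n0 := ler0n R n.
have [fx _] := fM x ltac:(lra); split=> // y /andP[y0 yK].
have [fxy near_xy] := fM (x - y) ltac:(lra).
have := near_xy y; rewrite y0 (le_trans yK Kn) subrK => /(_ isT).
move: (f (x - y)) (f x) fxy fx => a b a0 b0.
rewrite !ler_norml => /andP[h1 h2].
have ha : a <= 2 * b by nra.
apply/andP; split; nra.
Qed.

End long_tailed.

Section lebesgue.
Variable R : realType.
Local Notation mu := (@lebesgue_measure R).

Lemma measurable_reflect (x : R) : measurable_fun setT (fun y : R => x - y).
Proof. exact: measurable_funB. Qed.

Lemma lebesgue_measure_reflect (x : R) (A : set R) : measurable A ->
  pushforward mu ((fun y => x - y) : R -> measurableTypeR R) A = mu A.
Proof.
move=> mA; apply/esym/lebesgue_measure_unique => //; first exact: measurable_reflect.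
move=> ? X [[a b] _ <-].
change (mu `]a, b] = mu ((fun y => x - y) @^-1` `]a, b])).
have -> : (fun y => x - y) @^-1` `]a, b] = `[x - b, x - a[%classic.
  by apply/seteqP; split=> y /=; rewrite !in_itv /= => /andP[? ?]; apply/andP; split; lra.
rewrite !lebesgue_measure_itv /= !lte_fin.
have -> : (x - b < x - a) = (a < b) by apply/idP/idP => ?; lra.
by case: ifP => // _; congr (_%:E); ring.
Qed.

Lemma Rintegral_reflect (x : R) (D : set R) (g : R -> R) : measurable D ->
  measurable_fun D g -> (forall y, D y -> 0 <= g y) ->
  Rintegral mu D g = Rintegral mu ((fun y => x - y) @^-1` D) (fun y => g (x - y)).
Proof.
move=> mD mg g0; rewrite /Rintegral; congr fine.
rewrite -(@ge0_integral_pushforward _ _ (measurableTypeR R) (measurableTypeR R) _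
  (fun y => x - y) (measurable_reflect x) mu D (EFin \o g) mD); last 2 first.
- exact/measurable_EFinP.
- by move=> y /[!inE] Dy; rewrite lee_fin g0.
apply: eq_measure_integral; first exact: measurable_reflect.
by move=> ? A mA _; exact: (esym (lebesgue_measure_reflect x mA)).
Qed.

Lemma lebesgue_measure_subitv_lt_pinfty (a b : R) (D : set R) : measurable D ->
  D `<=` `[a, b]%classic -> (mu D < +oo)%E.
Proof.
move=> mD Dab; apply: (@le_lt_trans _ _ (mu `[a, b]%classic)).
  by apply: le_measure => //; rewrite inE //; exact: measurable_itv.
by rewrite lebesgue_measure_itv /=; case: ifP => _ //; rewrite -EFinB ltry.
Qed.

End lebesgue.

Section integrability.
Context d (T : measurableType d) (R : realType).

Lemma bounded_of_le (D : set T) (g : T -> R) (M : R) :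
  (forall y, D y -> `|g y| <= M) -> [bounded g y | y in D].
Proof.
move=> gM; exists M; split; first exact: num_real.
by move=> M' MM' y Dy; apply: le_trans (gM y Dy) (ltW MM').
Qed.

Lemma integrable_of_bounded (m : {measure set T -> \bar R}) (D : set T)
    (g : T -> R) (M : R) : measurable D -> (m D < +oo)%E ->
  measurable_fun D g -> (forall y, D y -> `|g y| <= M) ->
  m.-integrable D (EFin \o g).
Proof.
move=> mD mDfin mg /bounded_of_le gM.
exact: measurable_bounded_integrable.
Qed.

Lemma fine_measureU (m : {finite_measure set T -> \bar R}) (A B : set T) :
  measurable A -> measurable B -> A `&` B = set0 ->
  fine (m (A `|` B)) = fine (m A) + fine (m B).
Proof. by move=> mA mB AB; rewrite measureU // fineD // fin_num_measure. Qed.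

Lemma fine_probability_ge0_le1 (P : probability T R) (B : set T) :
  measurable B -> 0 <= fine (P B) <= 1.
Proof.
move=> mB; rewrite fine_ge0 ?measure_ge0 //=.
have := probability_le1 P mB.
by rewrite -(fineK (fin_num_measure P _ mB)) lee_fin.
Qed.

Lemma integrable_scale (m : {measure set T -> \bar R}) (D : set T) (g : T -> R)
    (a : R) : measurable D -> m.-integrable D (EFin \o g) ->
  m.-integrable D (EFin \o (fun y => a * g y)).
Proof.
by move=> mD ig; apply: eq_integrable (integrableZl mD a ig).
Qed.

Lemma Rintegral_weighted_dist_le (m : {measure set T -> \bar R}) (D : set T)
    (g w : T -> R) (c e : R) : measurable D -> measurable_fun D g ->
  m.-integrable D (EFin \o w) -> (forall y, D y -> 0 <= w y) ->
  (forall y, D y -> `|g y - c| <= e) ->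
  `|Rintegral m D (fun y => g y * w y) - c * Rintegral m D w|
    <= e * Rintegral m D w.
Proof.
move=> mD mg iw w0 gc.
have iMw (u : T -> R) (M : R) : measurable_fun D u ->
    (forall y, D y -> `|u y| <= M) ->
    m.-integrable D (EFin \o (fun y => u y * w y)).
  move=> mu' /bounded_of_le ub.
  by apply: eq_integrable (integrableMr mD mu' ub iw).
have icst (a : R) : m.-integrable D (EFin \o (fun y => a * w y)).
  exact: integrable_scale mD iw.
have igw : m.-integrable D (EFin \o (fun y => g y * w y)).
  apply: (iMw _ (`|c| + e)) => // y /gc gce; rewrite -[g y](subrK c).
  by apply: le_trans (ler_normD _ _) _; lra.
have igcw : m.-integrable D (EFin \o (fun y => (g y - c) * w y)).
  by apply: (iMw _ e) => //; apply: measurable_funB.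
have -> : Rintegral m D (fun y => g y * w y) - c * Rintegral m D w =
    Rintegral m D (fun y => (g y - c) * w y).
  by rewrite -RintegralZl // -RintegralB //; apply: eq_Rintegral => y _; ring.
rewrite ler_norml -mulNr -!RintegralZl //.
by apply/andP; split; apply: le_Rintegral => // y Dy;
  have := w0 y Dy; have := gc y Dy; rewrite ler_norml => /andP[? ?] ?; nra.
Qed.

End integrability.

Lemma probability_tail_small (R : realType) (P : probability R R) (e : R) :
  0 < e -> exists A, forall B, A <= B -> fine (P `]B, +oo[%classic) <= e.
Proof.
move=> e0; pose S (n : nat) : set R := `]n%:R, +oo[%classic.
have mS n : measurable (S n) by exact: measurable_itv.
have capS : \bigcap_n S n = set0.
  apply/seteqP; split=> y //= Sy.
  have := Sy (Num.Def.archi_bound `|y|) I; rewrite /S /= in_itv /= andbT.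
  have := archi_boundP (normr_ge0 y); have := ler_norm y; lra.
have S_nonincr : {homo S : n m / (n <= m)%N >-> (m <= n)%O}.
  move=> n m nm; rewrite subsetEset => y; rewrite /S /= !in_itv /= !andbT.
  have : (n%:R <= m%:R :> R) by rewrite ler_nat.
  lra.
have := @nonincreasing_cvg_mu _ _ _ P S (_ : _) mS (_ : _) S_nonincr.
rewrite capS measure0 => /(_ (le_lt_trans (probability_le1 P (mS 0%N)) (ltry 1))).
move=> /(_ measurable0) /fine_cvgP [_ /cvgrPdist_le /(_ e e0) [N _ PN]].
have := PN N (leqnn N); rewrite /= sub0r normrN => PSN.
exists N%:R => B NB; apply: le_trans PSN; apply: le_trans (ler_norm _).
apply: fine_le; rewrite ?fin_num_measure //; try exact: measurable_itv.
apply: le_measure; rewrite ?inE //; try exact: measurable_itv.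
by move=> y; rewrite /S /= !in_itv /= !andbT; lra.
Qed.

Section density.
Variables (R : realType) (F : probability R R) (f : R -> R) (xh : R).
Hypothesis Fd : has_density_on F f xh.
Local Notation mu := (@lebesgue_measure R).

Lemma density_ge0 y : xh <= y -> 0 <= f y.
Proof. by case: Fd => _ [+ _]; apply. Qed.

Lemma measurable_density : measurable_fun `[xh, +oo[%classic f.
Proof. by case: Fd. Qed.

Lemma Rintegral_density (B : set R) : measurable B -> B `<=` `[xh, +oo[%classic ->
  Rintegral mu B f = fine (F B).
Proof. by move=> mB BS; case: Fd => _ [_ ->]. Qed.

Lemma density_integrable (B : set R) : measurable B -> B `<=` `[xh, +oo[%classic ->
  mu.-integrable B (EFin \o f).
Proof.
move=> mB BS; apply/integrableP; split.
  by apply/measurable_EFinP; exact: (measurable_funS _ BS measurable_density).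
have -> : (\int[mu]_(y in B) `|(EFin \o f) y|)%E = (\int[mu]_(y in B) (f y)%:E)%E.
  apply: eq_integral => y /[!inE] /BS; rewrite /= in_itv /= andbT => /density_ge0.
  by move=> fy0; rewrite ger0_norm.
by case: Fd => _ [_ <-] //; rewrite -(fineK (fin_num_measure F _ mB)) ltry.
Qed.

Lemma measurable_density_reflect (x : R) (D : set R) : measurable D ->
  (forall y, D y -> xh <= x - y) -> measurable_fun D (fun y => f (x - y)).
Proof.
move=> mD Dx; apply: (measurable_comp (F := `[xh, +oo[%classic)) => //.
- by move=> _ [y Dy <-]; rewrite /= in_itv /= andbT; exact: Dx.
- exact: measurable_density.
- exact: measurable_funTS (measurable_reflect x).
Qed.

End density.

Section subexponential.
Variables (R : realType) (F : probability R R) (f : R -> R) (xh : R).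
Hypotheses (xh0 : 0 <= xh) (F0 : F `[0, +oo[%classic = 1%E)
  (Fd : has_density_on F f xh) (ltf : long_tailed_density f xh).
Local Notation mu := (@lebesgue_measure R).

Lemma convolution_integrable (x : R) (D : set R) : measurable D ->
  D `<=` `[xh, x - xh]%classic ->
  mu.-integrable D (EFin \o (fun y => f (x - y) * f y)).
Proof.
move=> mD Dx; have [M [M0 fM]] := long_tailed_bounded ltf.
have Dy y : D y -> xh <= y /\ xh <= x - y.
  by move=> /Dx; rewrite /= in_itv /= => /andP[? ?]; split; lra.
apply: (@integrable_of_bounded _ _ _ mu D _ (M * M) mD).
- exact: lebesgue_measure_subitv_lt_pinfty Dx.
- apply: measurable_funM.
    by apply: (measurable_density_reflect Fd) => // y /Dy[].
  apply: (measurable_funS _ _ (measurable_density Fd)) => // y /Dy[? _].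
  by rewrite /= in_itv /= andbT.
- by move=> y /Dy[? ?]; rewrite normrM ler_pM // fM.
Qed.

Lemma probability_split_at_xh :
  fine (F `[0, xh[%classic) + fine (F `[xh, +oo[%classic) = 1.
Proof.
rewrite -fine_measureU //; last first.
  by apply/seteqP; split=> y //= []; rewrite !in_itv /= => /andP[? ?] ?; lra.
rewrite -itv_bndbnd_setU // ?bnd_simp; exact: (congr1 fine F0).
Qed.

Lemma low_part_asymp (e : R) : 0 < e -> exists M, forall x, M < x ->
  `|Rintegral F `[0, xh[%classic (fun y => f (x - y))
    - fine (F `[0, xh[%classic) * f x| <= e * f x.
Proof.
move=> e0; have [M fM] := long_tailed_shiftB ltf xh e0.
exists (Num.max M (2 * xh)) => x; rewrite gt_max => /andP[/fM[fx near_x] x2].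
pose D := `[0, xh[%classic : set R.
have mD : measurable D by exact: measurable_itv.
have Dy y : D y -> 0 <= y <= xh.
  by rewrite /D /= in_itv /= => /andP[? ?]; apply/andP; split; lra.
have mfD : measurable_fun D (fun y => f (x - y)).
  by apply: (measurable_density_reflect Fd) => // y /Dy; lra.
have := Rintegral_weighted_dist_le (w := fun _ => 1) (c := f x) mD mfD
  (finite_measure_integrable_cst F 1 mD) (fun _ _ => ler01)
  (fun y Dy' => near_x y (Dy y Dy')).
have -> : Rintegral F D (fun y => f (x - y) * 1) = Rintegral F D (fun y => f (x - y)).
  by apply: eq_Rintegral => y _; rewrite mulr1.
rewrite Rintegral_cst // mul1r (mulrC (f x)) => /le_trans; apply.
have /andP[_ p1] := fine_probability_ge0_le1 F mD.
by rewrite ler_piMr // mulr_ge0 // ltW.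
Qed.

Lemma convolution_halves (x : R) : 2 * xh < x ->
  Rintegral mu `[xh, x - xh]%classic (fun y => f (x - y) * f y) =
  2 * Rintegral mu `[xh, x / 2]%classic (fun y => f (x - y) * f y).
Proof.
move=> x2.
have m1 : measurable (`[xh, x / 2]%classic : set R) by exact: measurable_itv.
have m2 : measurable (`]x / 2, x - xh]%classic : set R) by exact: measurable_itv.
have s2 : `]x / 2, x - xh]%classic `<=` `[xh, x - xh]%classic.
  by move=> y; rewrite /= !in_itv /= => /andP[? ?]; apply/andP; split; lra.
have s3 : `[xh, x / 2[%classic `<=` `[xh, x - xh]%classic.
  by move=> y; rewrite /= !in_itv /= => /andP[? ?]; apply/andP; split; lra.
have sp : `[xh, x - xh]%classic = `[xh, x / 2]%classic `|` `]x / 2, x - xh]%classic.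
  by rewrite -itv_bndbnd_setU // bnd_simp; lra.
have dj : [disjoint `[xh, x / 2]%classic & `]x / 2, x - xh]%classic].
  by apply/disj_setPLR => y; rewrite /= !in_itv /= => /andP[_ ?] /andP[? _]; lra.
rewrite sp Rintegral_setU // -?sp; last first.
  exact: convolution_integrable (measurable_itv _) (@subset_refl _ _).
rewrite (Rintegral_reflect x m2); last 2 first.
- by case/integrableP: (convolution_integrable m2 s2) => /measurable_EFinP.
- move=> y; rewrite /= in_itv /= => /andP[? ?].
  by rewrite mulr_ge0 // (density_ge0 Fd); lra.
have -> : (fun y => x - y) @^-1` `]x / 2, x - xh]%classic = `[xh, x / 2[%classic.
  by apply/seteqP; split=> y /=; rewrite !in_itv /= => /andP[? ?]; apply/andP; split; lra.
rewrite (@eq_Rintegral _ _ _ mu `[xh, x / 2[%classic (fun y => f (x - y) * f y));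
  last by move=> y _ /=; rewrite mulrC; congr (_ * f _); ring.
rewrite Rintegral_itv_bndo_bndc; last exact: convolution_integrable (measurable_itv _) s3.
by rewrite mulr_natl mulr2n.
Qed.

Definition admissible_split := forall e : R, 0 < e ->
  exists M : R, forall x, M < x -> exists k, xh <= k <= x / 2 /\
    (forall y, xh <= y <= k -> `|f (x - y) - f x| <= e * f x) /\
    fine (F `]k, +oo[%classic) <= e /\
    Rintegral mu `]k, x / 2]%classic (fun y => f (x - y) * f y) <= e * f x.

Lemma near_convolution_asymp (x k e : R) : xh <= k -> k <= x - xh ->
  (forall y, xh <= y <= k -> `|f (x - y) - f x| <= e * f x) ->
  `|Rintegral mu `[xh, k]%classic (fun y => f (x - y) * f y)
    - fine (F `[xh, k]%classic) * f x| <= e * f x.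
Proof.
move=> xhk kx near_k.
have mD : measurable (`[xh, k]%classic : set R) by exact: measurable_itv.
have sD : `[xh, k]%classic `<=` `[xh, +oo[%classic.
  by move=> y; rewrite /= !in_itv /= andbT => /andP[].
have ef0 : 0 <= e * f x.
  by apply: le_trans (near_k xh _); rewrite ?lexx ?xhk.
have /andP[_ P1] := fine_probability_ge0_le1 F mD.
rewrite -(Rintegral_density Fd mD sD) mulrC.
apply: le_trans (_ : _ <= e * f x * Rintegral mu `[xh, k]%classic f) _.
  apply: (@Rintegral_weighted_dist_le _ _ _ mu _ (fun y => f (x - y)) f _ _ mD _
    (density_integrable Fd mD sD)).
  - apply: (measurable_density_reflect Fd) => // y.
    by rewrite /= in_itv /= => /andP[? ?]; lra.
  - by move=> y /sD; rewrite /= in_itv /= andbT => /(density_ge0 Fd).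
  - by move=> y; rewrite /= in_itv /=; exact: near_k.
by rewrite (Rintegral_density Fd mD sD) ler_piMr.
Qed.

Lemma half_convolution_asymp : admissible_split ->
  forall e : R, 0 < e -> exists M : R, forall x, M < x ->
  `|Rintegral mu `[xh, x / 2]%classic (fun y => f (x - y) * f y)
    - fine (F `[xh, +oo[%classic) * f x| <= e * f x.
Proof.
move=> split_ok e e0; have e3 : 0 < e / 3 by rewrite divr_gt0.
have [M HM] := split_ok _ e3.
exists M => x /HM[k [/andP[xhk kx] [near_k [tail_k mid_k]]]].
have xh0' := xh0. (* lra does not use section hypotheses *)
have fx0 : 0 <= f x by apply: (density_ge0 Fd); lra.
have kx' : k <= x - xh by lra.
have sp : `[xh, x / 2]%classic = `[xh, k]%classic `|` `]k, x / 2]%classic.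
  by rewrite -itv_bndbnd_setU // bnd_simp.
have -> : Rintegral mu `[xh, x / 2]%classic (fun y => f (x - y) * f y) =
    Rintegral mu `[xh, k]%classic (fun y => f (x - y) * f y) +
    Rintegral mu `]k, x / 2]%classic (fun y => f (x - y) * f y).
  rewrite sp; apply: Rintegral_setU; try exact: measurable_itv.
    rewrite -sp; apply: convolution_integrable; first exact: measurable_itv.
    by move=> y; rewrite /= !in_itv /= => /andP[? ?]; apply/andP; split; lra.
  by apply/disj_setPLR => y; rewrite /= !in_itv /= => /andP[_ ?] /andP[? _]; lra.
have -> : fine (F `[xh, +oo[%classic) =
    fine (F `[xh, k]%classic) + fine (F `]k, +oo[%classic).
  rewrite -fine_measureU; try exact: measurable_itv.
    by rewrite -itv_bndbnd_setU // bnd_simp.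
  by apply/seteqP; split=> y //= []; rewrite !in_itv /= => /andP[_ ?] /andP[? _]; lra.
have mid_ge0 : 0 <= Rintegral mu `]k, x / 2]%classic (fun y => f (x - y) * f y).
  apply: Rintegral_ge0 => y; rewrite /= in_itv /= => /andP[? ?].
  by rewrite mulr_ge0 // (density_ge0 Fd); lra.
have /andP[T0 _] := fine_probability_ge0_le1 F (measurable_itv `]k, +oo[).
move: (near_convolution_asymp xhk kx' near_k) mid_k mid_ge0 tail_k T0.
move: (Rintegral _ _ _) (Rintegral _ _ _) (fine (F _)) (fine (F _)) => I1 I2 P T.
rewrite !ler_norml => /andP[? ?] ? ? ? ?; apply/andP; split; nra.
Qed.

Lemma middle_convolution_le_of_doubling (c k x : R) : 0 < c ->
  xh <= k -> k <= x / 2 -> (forall y, k < y <= x / 2 -> c * f (x - y) <= f x) ->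
  Rintegral mu `]k, x / 2]%classic (fun y => f (x - y) * f y)
    <= f x / c * fine (F `]k, +oo[%classic).
Proof.
move=> c0 xhk kx doubling.
have xh0' := xh0.
pose D := `]k, x / 2]%classic : set R.
have mD : measurable D by exact: measurable_itv.
have Dy y : D y -> k < y <= x / 2 by rewrite /D /= in_itv.
have sD : D `<=` `[xh, +oo[%classic.
  by move=> y /Dy /andP[? ?]; rewrite /= in_itv /= andbT; lra.
have iD : mu.-integrable D (EFin \o f) := density_integrable Fd mD sD.
have bound y : D y -> f (x - y) * f y <= f x / c * f y.
  move=> Dy'; have /andP[? ?] := Dy y Dy'.
  have fy : 0 <= f y by apply: (density_ge0 Fd); lra.
  by rewrite ler_wpM2r // ler_pdivlMr // mulrC doubling.
have iconv : mu.-integrable D (EFin \o (fun y => f (x - y) * f y)).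
  apply: convolution_integrable mD _ => y /Dy /andP[? ?].
  by rewrite /= in_itv /=; apply/andP; split; lra.
apply: le_trans (@le_Rintegral _ _ _ mu _ _ _ mD iconv
  (@integrable_scale _ _ _ mu D f (f x / c) mD iD) bound) _.
rewrite RintegralZl // (Rintegral_density Fd mD sD) ler_wpM2l //.
  by apply: divr_ge0; [apply: (density_ge0 Fd); lra | exact: ltW].
apply: fine_le; rewrite ?fin_num_measure //; try exact: measurable_itv.
apply: le_measure; rewrite ?inE //; try exact: measurable_itv.
by move=> y /Dy /andP[? _]; rewrite /= in_itv /= andbT.
Qed.

Lemma admissible_split_of_doubling (c : R) : 0 < c ->
  (\forall x \near +oo, forall y : R, x < y <= 2 * x -> c * f x <= f y) ->
  admissible_split.
Proof.
move=> c0 /near_pinftyP[Mc fMc] e e0.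
have ec0 : 0 < Num.min e (e * c) by rewrite lt_min e0 mulr_gt0.
have [A FA] := probability_tail_small F ec0.
pose k := Num.max A xh.
have Ak : A <= k by rewrite le_max lexx.
have xhk : xh <= k by rewrite le_max lexx orbT.
have [tail_e tail_ec] : fine (F `]k, +oo[%classic) <= e /\
    fine (F `]k, +oo[%classic) <= e * c.
  by have := FA k Ak; rewrite le_min => /andP[].
have [M fM] := long_tailed_shiftB ltf k e0.
exists (Num.max M (Num.max (2 * k) (2 * Mc))) => x.
rewrite !gt_max => /and3P[/fM[fx near_x] x2k x2Mc].
have xh0' := xh0.
have kx : k <= x / 2 by lra.
exists k; split; first by rewrite xhk kx.
split; first by move=> y /andP[? ?]; apply: near_x; apply/andP; split; lra.
split=> //.
(* the doubling condition at x - y, since x - y < x <= 2 (x - y) *)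
apply: le_trans (middle_convolution_le_of_doubling c0 xhk kx _) _.
  by move=> y /andP[? ?]; apply: fMc; [lra | apply/andP; split; lra].
apply: le_trans (ler_wpM2l _ tail_ec) _; first by rewrite divr_ge0 // ltW.
by rewrite mulrCA divfK ?gt_eqF.
Qed.

Lemma middle_convolution_small_of_concave (x0 a x e : R) :
  concave_on (fun x => - ln (f x)) `[x0, +oo[%classic ->
  x0 <= a -> xh <= a -> a < x / 2 -> (forall y, a <= y -> 0 < f y) ->
  f (x - a) <= 2 * f x -> x * f a <= e / 2 ->
  Rintegral mu `]a, x / 2]%classic (fun y => f (x - y) * f y) <= e * f x.
Proof.
move=> conc x0a xha ax fpos fxa xfa.
pose D := `]a, x / 2]%classic : set R.
have mD : measurable D by exact: measurable_itv.
have Dy y : D y -> a < y <= x / 2 by rewrite /D /= in_itv.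
have Dsub : D `<=` `[xh, x - xh]%classic.
  by move=> y /Dy /andP[? ?]; rewrite /= in_itv /=; apply/andP; split; lra.
have bound y : D y -> f (x - y) * f y <= f a * f (x - a).
  move=> /Dy /andP[? ?]; rewrite mulrC.
  have -> : x - y = a + (x - a) - y by ring.
  by apply: (mul_le_of_concave_neg_ln conc x0a); try (apply: fpos); lra.
have icst : mu.-integrable D (EFin \o (fun _ => f a * f (x - a))).
  apply: (@integrable_of_bounded _ _ _ mu D _ `|f a * f (x - a)| mD).
  - exact: lebesgue_measure_subitv_lt_pinfty Dsub.
  - exact: measurable_cst.
  - by [].
have := @le_Rintegral _ _ _ mu _ _ _ mD (convolution_integrable mD Dsub) icst bound.
have muD : fine (mu D) = x / 2 - a.
  by rewrite /D lebesgue_measure_itv /= lte_fin ax -EFinB.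
rewrite Rintegral_cst // muD mulrC mulrA => /le_trans; apply.
(* (x/2 - a) f(a) f(x - a) <= (x/2) f(a) (2 f(x)) = x f(a) f(x) <= e/2 f(x) *)
have xh0' := xh0.
have fa : 0 < f a by exact: fpos.
have fxa0 : 0 < f (x - a) by apply: fpos; lra.
have dfa : (x / 2 - a) * f a <= e / 4 by nra.
have dfa0 : 0 <= (x / 2 - a) * f a by rewrite mulr_ge0 ?subr_ge0 ?ltW.
by move: dfa0 dfa; move: ((x / 2 - a) * f a) => P P0 Pe; nra.
Qed.

Lemma concave_window_eventually (h : R -> R) (A e : R) : 0 < e ->
  h x @[x --> +oo] --> +oo ->
  (forall eps : R, 0 < eps -> \forall x \near +oo,
     forall t : R, `|t| <= h x -> `|f (x + t) / f x - 1| <= eps) ->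
  (fun x => x * expR (- (- ln (f (h x))))) x @[x --> +oo] --> (0 : R) ->
  exists M, forall x, M < x -> [/\ A < h x, 0 < f x, x * f (h x) <= e &
    forall y, 0 <= y <= h x -> `|f (x - y) - f x| <= e * f x].
Proof.
move=> e0 hoo hunif hsmall.
have [Mp fpos] := long_tailed_pos ltf.
have /near_pinftyP[Mh hA] : \forall x \near +oo, Num.max A Mp < h x.
  by move/cvgryPgt : hoo; apply.
have /near_pinftyP[Mu near_x] := hunif _ e0.
have /near_pinftyP[Mq small] :
    \forall x \near +oo, `|0 - x * expR (- (- ln (f (h x))))| <= e.
  by move/cvgrPdist_le : hsmall; apply.
exists (Num.max Mh (Num.max Mu (Num.max Mq Mp))) => x.
rewrite !gt_max => /and4P[/hA hx /near_x near_x' /small small_x /fpos fx].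
move: hx; rewrite gt_max => /andP[Ahx /fpos fhx].
rewrite opprK lnK ?posrE // sub0r normrN in small_x.
split=> //; first exact: le_trans (ler_norm _) small_x.
move=> y /andP[y0 yh]; apply: dist_le_of_ratio fx (near_x' (- y) _).
by rewrite normrN ger0_norm.
Qed.

Lemma admissible_split_of_concave_neg_ln (x0 : R) (h : R -> R) :
  concave_on (fun x => - ln (f x)) `[x0, +oo[%classic ->
  h x @[x --> +oo] --> +oo ->
  (forall eps : R, 0 < eps -> \forall x \near +oo,
     forall t : R, `|t| <= h x -> `|f (x + t) / f x - 1| <= eps) ->
  (fun x => x * expR (- (- ln (f (h x))))) x @[x --> +oo] --> (0 : R) ->
  admissible_split.
Proof.
move=> conc hoo hunif hsmall e e0.
pose e' := Num.min (e / 2) 1.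
have e'0 : 0 < e' by rewrite lt_min ltr01 andbT divr_gt0.
have [e'e e'1] : e' <= e / 2 /\ e' <= 1 by rewrite !ge_min !lexx orbT.
have [Mp fpos] := long_tailed_pos ltf.
have [A FA] := probability_tail_small F e0.
pose A' := Num.max (Num.max A xh) (Num.max x0 Mp).
have [AA' [xhA' [x0A' MpA']]] : [/\ A <= A', xh <= A', x0 <= A' & Mp <= A'].
  by rewrite !le_max !lexx !orbT.
have [M HM] := concave_window_eventually A' e'0 hoo hunif hsmall.
exists (Num.max M (2 * A')) => x; rewrite gt_max => /andP[/HM[hx fx xfa flat] x2].
have xh0' := xh0.
pose k := Num.min (h x) (x / 2).
have kh : k <= h x by rewrite ge_min lexx.
have kx : k <= x / 2 by rewrite ge_min lexx orbT.
have A'k : A' < k by rewrite lt_min hx /=; lra.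
exists k; split; first by apply/andP; split; lra.
split.
  move=> y /andP[? ?]; apply: le_trans (flat y _) _; first by apply/andP; split; lra.
  by apply: ler_wpM2r; [exact: ltW | lra].
split; first by apply: FA; lra.
have [hx2|hx2] := leP (x / 2) (h x).
  rewrite /k (min_r hx2) (_ : `]x / 2, x / 2]%classic = set0).
    by rewrite Rintegral_set0 mulr_ge0 // ltW.
  by apply/seteqP; split=> y //=; rewrite in_itv /= => /andP[? ?]; lra.
rewrite /k (min_l (ltW hx2)).
have fxa : f (x - h x) <= 2 * f x.
  have := flat (h x); rewrite lexx andbT ler_norml => /(_ ltac:(lra)) /andP[_].
  by nra.
apply: (middle_convolution_small_of_concave conc (ltW (le_lt_trans x0A' hx))
  (ltW (le_lt_trans xhA' hx)) hx2 _ fxa); last by lra.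
by move=> y ?; apply: fpos; lra.
Qed.

Lemma S_ac_of_admissible_split : admissible_split -> S_ac F f xh.
Proof.
move=> split_ok; split=> //; apply/cvgrPdist_le => e e0.
have e4 : 0 < e / 4 by rewrite divr_gt0.
have [M1 low] := low_part_asymp e4.
have [M2 high] := half_convolution_asymp split_ok e4.
have [M3 fpos] := long_tailed_pos ltf.
apply/near_pinftyP; exists (Num.max M1 (Num.max M2 (Num.max M3 (2 * xh)))) => x.
rewrite !gt_max => /and4P[/low low_x /high high_x /fpos fx x2].
rewrite convolution_halves //.
exact: dist1_ratio_le fx probability_split_at_xh low_x high_x.
Qed.

End subexponential.

Theorem proposition11 (R : realType) (F : probability R R) (f : R -> R) (xh : R) :
  0 <= xh ->
  F `[0%R, +oo[%classic = 1%E ->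
  has_density_on F f xh ->
  long_tailed_density f xh ->
  ((exists c : R, 0 < c /\
      \forall x \near +oo, forall y : R, x < y <= 2 * x -> c * f x <= f y)
   \/
   (exists x0 : R, exists h : R -> R,
      concave_on (fun x => - ln (f x)) `[x0, +oo[%classic /\
      h x @[x --> +oo] --> +oo /\
      (forall eps : R, 0 < eps -> \forall x \near +oo,
         forall t : R, `|t| <= h x -> `|f (x + t) / f x - 1| <= eps) /\
      (fun x => x * expR (- (- ln (f (h x))))) x @[x --> +oo] --> (0 : R))) ->
  S_ac F f xh.
Proof.
move=> xh0 F0 Fd ltf cases; apply: (S_ac_of_admissible_split xh0 F0 Fd ltf).
case: cases => [[c [c0 doubling]] | [x0 [h [conc [hoo [hunif hsmall]]]]]].
- exact: (admissible_split_of_doubling xh0 Fd ltf c0 doubling).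
- exact: (admissible_split_of_concave_neg_ln xh0 Fd ltf conc hoo hunif hsmall).
Qed.
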